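(* Let $F$ be a near-idempotent tract, let $J\subseteq\Delta^r_n$ and $J'\subseteq\Delta^{r'}_{n'}$ be M-convex sets, and let $\iota\colon J\to J'$ be a polymatroid embedding. For an $F$-representation $\rho$ of $J'$, define $\iota^*\rho\colon\Delta^r_n\to F$ by $\iota^*\rho(\alpha)=\rho(\iota(\alpha))$ for $\alpha\in J$ and $\iota^*\rho(\alpha)=0$ otherwise. Then $\iota^*\rho$ is an $F$-representation of $J$, and $[\rho]\mapsto[\iota^*\rho]$ is a well-defined map $\iota^*\colon\mathrm{Gr}_{J'}(F)\to\mathrm{Gr}_J(F)$. If $\iota$ is bijective, then $\iota^*$ is bijective.
   Context: Tract: commutative monoid with absorbing $0$, $F^\times=F\setminus\{0\}$ a group, null set $N_F$ an ideal of $\mathbb N[F^\times]$ with unique additive inverses. $F$ is near-idempotent if $1+1\in N_F$ (so $-1=1$) and $1+1+x\in N_F$ for some $x\in F^\times$. M-convex $J\subseteq\Delta^r_n$: nonempty, and for $\alpha,\beta\in J$ and $i$ with $\alpha_i<\beta_i$ there is $j$ with $\alpha_j>\beta_j$ and $\alpha+\epsilon_i-\epsilon_j,\beta-\epsilon_i+\epsilon_j\in J$; $\delta^\mp_J$ = componentwise min/max. For near-idempotent $F$, an $F$-representation of $J$ is $\rho\colon\Delta^r_n\to F$ with support exactly $J$ such that $\sum_{k=0}^s\rho(\alpha-\epsilon_{i_k}+\epsilon_{i_0}+\dots+\epsilon_{i_s})\rho(\alpha+\epsilon_{i_k}+\epsilon_{j_2}+\dots+\epsilon_{j_s})\in N_F$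 for all $2\le s\le r$, $\alpha\in\Delta^{r-s}_n$ with $\delta^-_J\le\alpha$, and $i_0,\dots,i_s,j_2,\dots,j_s\in[n]$ with $\alpha+\epsilon_{i_0}+\dots+\epsilon_{i_s}+\epsilon_{j_2}+\dots+\epsilon_{j_s}\le\delta^+_J$. $\mathrm{Gr}_J(F)$ is the set of $F$-representations modulo $\rho\sim a\rho$ ($a\in F^\times$). Deletion and contraction: for $\nu\in\mathbb N^n$ with $\nu\le\delta^+_J-\alpha$ for some $\alpha\in J$, $J\setminus\nu=\{\alpha\in J:\alpha\le\delta^+_J-\nu\}$; for $\mu\in\mathbb N^n$ with $\mu\le\alpha-\delta^-_J$ for some $\alpha\in J$, $J/\mu=\{\alpha-\mu:\alpha\in J,\ \delta^-_J+\mu\le\alpha\}$. An embedded minor is $J\setminus\nu/\mu+\tau=((J\setminus\nu)/\mu)+\tau$ where $\mu+\delta^-_{J\setminus\nu}\le\alpha\le\delta^+_J-\nu$ for some $\alpha\in J$ and $\tau\in\mathbb Z^n$ with $\tau\ge-\delta^-_{(J\setminus\nu)/\mu}$; its minor embedding is $J\setminus\nu/\mu+\tau\to J$, $\alpha\mapsto\alpha+\mu-\tau$. For $\sigma\in S_n$, $\iota_\sigma\colon J\to\sigma(J)$ permutes coordinates; $\iota_n\colon J\to\iota_n(J)\subseteq\Delta^r_{n+1}$ appends a zero coordinate (extension of variables), and its inverse $\iota_n(J)\to J$ is a restriction of variables. These four kinds of maps are elementary polymatroid embeddings; a polymatroid embedding is a composition of elementary ones (all these sets are M-convex). *)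

From HB Require Import structures.
From Stdlib Require Import Permutation.
From mathcomp Require Import all_boot all_order all_algebra all_fingroup.
From mathcomp Require Import finmap.
Set Implicit Arguments. Unset Strict Implicit. Unset Printing Implicit Defensive.
Import Order.TTheory GRing.Theory Num.Theory.


(* Tracts.  A tract F = F^x ∪ {0}: the unit group F^x is the carrier tG     *)
(* (an abstract commutative group), F itself is [option tG] with None = 0   *)
(* (absorbing).  Elements of N[F^x] are finite multisets, i.e. lists up to  *)
(* permutation; the null set N_F is a permutation-invariant predicate on    *)
(* such lists forming an ideal of the semiring N[F^x] and having unique     *)
(* additive inverses.                                                       *)
Record tract := Tract {
  tG :> Type;
  tmul : tG -> tG -> tG;
  tone : tG;
  tinv : tG -> tG;
  tmulA : associative tmul;
  tmulC : commutative tmul;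
  tmul1 : left_id tone tmul;
  tmulV : forall x, tmul (tinv x) x = tone;
  tnull : seq tG -> Prop;
  tnull_perm : forall s t, Permutation s t -> tnull s -> tnull t;
  tnull0 : tnull [::];
  tnullD : forall s t, tnull s -> tnull t -> tnull (s ++ t);
  tnullM : forall s t, tnull s -> tnull [seq tmul x y | x <- t, y <- s];
  tnull_inv : forall x, exists! y, tnull [:: x; y];
}.

Definition tF (F : tract) := option (tG F).
Definition fzero (F : tract) : tF F := None.
Definition fmul (F : tract) (a b : tF F) : tF F :=
  match a, b with Some x, Some y => Some (tmul x y) | _, _ => None end.
(* "a_1 + ... + a_k ∈ N_F" for a_i ∈ F: zero summands are dropped *)
Definition fnull (F : tract) (s : seq (tF F)) : Prop := tnull (pmap id s).

Definition near_idempotent (F : tract) : Prop :=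
  tnull [:: tone F; tone F] /\ exists x : F, tnull [:: tone F; tone F; x].

Definition vec (n : nat) := {ffun 'I_n -> nat}.
Definition vsum n (a : vec n) : nat := \sum_(i < n) a i.
Definition vadd n (a b : vec n) : vec n := [ffun i => a i + b i].
(* truncated subtraction; only used where it is exact *)
Definition vsub n (a b : vec n) : vec n := [ffun i => a i - b i].
Definition vle n (a b : vec n) : bool := [forall i, a i <= b i].
Definition unitv n (i : 'I_n) : vec n := [ffun j => nat_of_bool (j == i)].
Definition sumunits n m (f : 'I_m -> 'I_n) : vec n :=
  [ffun t => \sum_(k < m) nat_of_bool (f k == t)].

Definition dmax n (J : {fset vec n}) : vec n := [ffun i => \max_(a <- J) a i].
Definition dmin n (J : {fset vec n}) : vec n :=
  [ffun i => \big[minn/dmax J i]_(a <- J) a i].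

Definition Mconvex n (r : nat) (J : {fset vec n}) : Prop :=
  J != fset0 /\
  (forall a, a \in J -> vsum a = r) /\
  (forall a b, a \in J -> b \in J -> forall i, a i < b i ->
     exists j, b j < a j /\
       vsub (vadd a (unitv i)) (unitv j) \in J /\
       vadd (vsub b (unitv i)) (unitv j) \in J).

Definition is_rep (F : tract) n (r : nat) (J : {fset vec n})
    (rho : vec n -> tF F) : Prop :=
  (forall a, rho a <> None <-> a \in J) /\
  (forall s, 2 <= s <= r ->
   forall a : vec n, vsum a = r - s -> vle (dmin J) a ->
   forall (i : 'I_s.+1 -> 'I_n) (j : 'I_s.-1 -> 'I_n),
   vle (vadd (vadd a (sumunits i)) (sumunits j)) (dmax J) ->
   fnull [seq fmul (rho (vsub (vadd a (sumunits i)) (unitv (i k))))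
                   (rho (vadd (vadd a (unitv (i k))) (sumunits j)))
         | k : 'I_s.+1]).

(* rho ~ c rho for c ∈ F^x; classes for ~ are the points of Gr_J(F) *)
Definition rep_equiv (F : tract) n (rho1 rho2 : vec n -> tF F) : Prop :=
  exists c : F, forall a, rho2 a = fmul (Some c) (rho1 a).

Definition delset n (J : {fset vec n}) (nu : vec n) : {fset vec n} :=
  [fset a in J | vle (vadd a nu) (dmax J)]%fset.
Definition conset n (J : {fset vec n}) (mu : vec n) : {fset vec n} :=
  [fset vsub a mu | a in [fset a in J | vle (vadd (dmin J) mu) a]%fset]%fset.
(* translation by tau ∈ Z^n (exact on the sets where it is used) *)
Definition shiftv n (a : vec n) (tau : {ffun 'I_n -> int}) : vec n :=
  [ffun i => `|((a i)%:Z + tau i)%R|%N].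
Definition minor n (J : {fset vec n}) (nu mu : vec n) (tau : {ffun 'I_n -> int})
  : {fset vec n} := [fset shiftv a tau | a in conset (delset J nu) mu]%fset.
Definition minor_ok n (J : {fset vec n}) (nu mu : vec n) (tau : {ffun 'I_n -> int})
  : Prop :=
  (exists2 a, a \in J &
     vle (vadd mu (dmin (delset J nu))) a /\ vle (vadd a nu) (dmax J)) /\
  (forall i, (0 <= (dmin (conset (delset J nu) mu) i)%:Z + tau i)%R).
Definition minor_emb n (mu : vec n) (tau : {ffun 'I_n -> int}) (a : vec n) : vec n :=
  [ffun i => `|((a i)%:Z + (mu i)%:Z - tau i)%R|%N].

Definition permv n (s : 'S_n) (a : vec n) : vec n := [ffun i => a ((s^-1)%g i)].
Definition permset n (s : 'S_n) (J : {fset vec n}) : {fset vec n} :=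
  [fset permv s a | a in J]%fset.

Definition extv n (a : vec n) : vec n.+1 :=
  [ffun i => if unlift ord_max i is Some j then a j else 0].
Definition extset n (J : {fset vec n}) : {fset vec n.+1} := [fset extv a | a in J]%fset.
Definition resv n (a : vec n.+1) : vec n := [ffun j => a (lift ord_max j)].

Inductive PE : forall n n', {fset vec n} -> {fset vec n'} -> (vec n -> vec n') -> Prop :=
| PE_minor n r (J : {fset vec n}) (nu mu : vec n) (tau : {ffun 'I_n -> int}) :
    Mconvex r J -> minor_ok J nu mu tau ->
    PE (minor J nu mu tau) J (minor_emb mu tau)
| PE_perm n r (J : {fset vec n}) (s : 'S_n) :
    Mconvex r J -> PE J (permset s J) (permv s)
| PE_ext n r (J : {fset vec n}) :
    Mconvex r J -> PE J (extset J) (@extv n)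
| PE_res n r (J : {fset vec n}) :
    Mconvex r J -> PE (extset J) J (@resv n)
| PE_comp n1 n2 n3 (J1 : {fset vec n1}) (J2 : {fset vec n2}) (J3 : {fset vec n3})
    (f : vec n1 -> vec n2) (g : vec n2 -> vec n3) :
    PE J1 J2 f -> PE J2 J3 g -> PE J1 J3 (g \o f).

Definition bij_on n n' (J : {fset vec n}) (J' : {fset vec n'}) (iota : vec n -> vec n')
  : Prop :=
  {in J &, injective iota} /\ (forall b, b \in J' -> exists2 a, a \in J & iota a = b).

Definition pullback (F : tract) n n' (J : {fset vec n}) (iota : vec n -> vec n')
  (rho : vec n' -> tF F) : vec n -> tF F :=
  fun a => if a \in J then rho (iota a) else None.

From mathcomp Require Import all_boot all_order all_algebra all_fingroup finmap zify.
Set Implicit Arguments. Unset Strict Implicit. Unset Printing Implicit Defensive.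
Import Order.TTheory GRing.Theory Num.Theory.

(* Every elementary embedding agrees on its domain with a composite of three
   kinds of maps: relabelling coordinates along an injection of index sets
   (permutations and extensions of variables, with restriction of variables as
   left inverse), translation by an integer vector, and the inclusion of a
   subset J0 of J that is cut out of J by the box [delta^-_J0, delta^+_J0]
   (the minor J \ nu / mu, before translating it by tau - mu).  Each such map
   is affine on the relevant box and sends unit vectors to unit vectors, so
   every relation of iota^* rho at a base point alpha is, term by term, the
   relation of rho at iota(alpha), whose base point satisfies the side
   conditions because delta^-/delta^+ are attained coordinatewise.  When the
   map is onto, its inverse is of the same kind and pulls back the other way.
   These properties are stable under composition. *)

Section Vectors.
Variable n : nat.
Implicit Types (a b y : vec n) (J : {fset vec n}).

Lemma vaddE a b t : vadd a b t = a t + b t. Proof. by rewrite ffunE. Qed.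
Lemma vsubE a b t : vsub a b t = a t - b t. Proof. by rewrite ffunE. Qed.

Lemma unitv_le_sumunits m (f : 'I_m -> 'I_n) k t : unitv (f k) t <= sumunits f t.
Proof. by rewrite !ffunE (bigD1 k) //= eq_sym leq_addr. Qed.

(* Unlike [ffunP], this produces pointwise goals whose coercions are syntactically
   those of the statements below, so that [lia] identifies the atoms [a t]. *)
Lemma vecP a b : (forall t, a t = b t) -> a = b.
Proof. by move=> e; apply/ffunP. Qed.

Lemma vleP a b : reflect (forall t, a t <= b t) (vle a b).
Proof. exact: forallP. Qed.

Lemma vle_trans : transitive (@vle n).
Proof. by move=> b a c /vleP ab /vleP bc; apply/vleP => t; apply: leq_trans (ab t) (bc t). Qed.

Lemma big_attained (T : eqType) (op : nat -> nat -> nat) d (s : seq T) (F : T -> nat) :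
  (forall u v, op u v = u \/ op u v = v) ->
  \big[op/d]_(x <- s) F x = d \/ exists2 x, x \in s & \big[op/d]_(x <- s) F x = F x.
Proof.
move=> op_sel; rewrite big_seq.
apply: (big_ind (fun v => v = d \/ exists2 x, x \in s & v = F x)); first by left.
- by move=> u v hu hv; case: (op_sel u v) => ->.
- by move=> x xs; right; exists x.
Qed.

Lemma bigmin_le (T : eqType) d (s : seq T) (F : T -> nat) x :
  x \in s -> \big[minn/d]_(y <- s) F y <= F x.
Proof.
elim: s => //= y s IH; rewrite inE big_cons => /predU1P [->|/IH]; first exact: geq_minl.
exact: leq_trans (geq_minr _ _).
Qed.

Lemma dmin_leq J a t : a \in J -> dmin J t <= a t.
Proof. by move=> aJ; rewrite ffunE bigmin_le. Qed.

Lemma leq_dmax J a t : a \in J -> a t <= dmax J t.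
Proof. by move=> aJ; rewrite ffunE (leq_bigmax_seq (F := fun x : vec n => x t) _ aJ). Qed.

Lemma vle_dminP J y : J != fset0 ->
  reflect (forall t, exists2 b : vec n, b \in J & b t <= y t) (vle (dmin J) y).
Proof.
move=> neJ; apply: (iffP (vleP _ _)) => h t; last first.
  by have [b bJ le] := h t; apply: leq_trans (dmin_leq t bJ) le.
have [b0 b0J] := fset0Pn _ neJ.
have minn_sel u v : minn u v = u \/ minn u v = v.
  by case: leqP; [left | right].
move: (h t); rewrite ffunE.
have [->|[b bJ ->]] := big_attained (dmax J t) J (fun x => x t) minn_sel.
  by move=> le; exists b0 => //; apply: leq_trans (leq_dmax t b0J) le.
by exists b.
Qed.

Lemma vle_dmaxP J y : J != fset0 ->
  reflect (forall t, exists2 b : vec n, b \in J & y t <= b t) (vle y (dmax J)).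
Proof.
move=> neJ; apply: (iffP (vleP _ _)) => h t; last first.
  by have [b bJ le] := h t; apply: leq_trans le (leq_dmax t bJ).
have [b0 b0J] := fset0Pn _ neJ.
have maxn_sel u v : maxn u v = u \/ maxn u v = v.
  by case: leqP; [right | left].
move: (h t); rewrite ffunE.
have [->|[b bJ ->]] := big_attained 0 J (fun x => x t) maxn_sel.
  by rewrite leqn0 => /eqP->; exists b0.
by exists b.
Qed.

End Vectors.

Definition rel_lhs n s (al : vec n) (i : 'I_s.+1 -> 'I_n) k : vec n :=
  vsub (vadd al (sumunits i)) (unitv (i k)).
Definition rel_rhs n s (al : vec n) (i : 'I_s.+1 -> 'I_n) (j : 'I_s.-1 -> 'I_n) k : vec n :=
  vadd (vadd al (unitv (i k))) (sumunits j).
Definition rel_top n s (al : vec n) (i : 'I_s.+1 -> 'I_n) (j : 'I_s.-1 -> 'I_n) : vec n :=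
  vadd (vadd al (sumunits i)) (sumunits j).

Definition admissible n r (J : {fset vec n}) s al (i : 'I_s.+1 -> 'I_n) (j : 'I_s.-1 -> 'I_n) :=
  [/\ 2 <= s <= r, vsum al = r - s, vle (dmin J) al & vle (rel_top al i j) (dmax J)].

Section RelationTerms.
Variables (n s : nat) (al : vec n) (i : 'I_s.+1 -> 'I_n) (j : 'I_s.-1 -> 'I_n) (k : 'I_s.+1).

Lemma rel_lhs_between t : al t <= rel_lhs al i k t <= rel_top al i j t.
Proof. by rewrite /rel_lhs /rel_top vsubE !vaddE; have := unitv_le_sumunits i k t; lia. Qed.

Lemma rel_rhs_between t : al t <= rel_rhs al i j k t <= rel_top al i j t.
Proof. by rewrite /rel_rhs /rel_top !vaddE; have := unitv_le_sumunits i k t; lia. Qed.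

End RelationTerms.

Definition rank n r (J : {fset vec n}) := {in J, forall a, vsum a = r}.

Lemma rank_unique n r1 r2 (J : {fset vec n}) :
  J != fset0 -> rank r1 J -> rank r2 J -> r1 = r2.
Proof. by case/fset0Pn => a aJ h1 h2; rewrite -(h1 a aJ) h2. Qed.

Section Pullback.
Variable F : tract.

Lemma rep_notin n r (J : {fset vec n}) (rho : vec n -> tF F) a :
  is_rep r J rho -> a \notin J -> rho a = None.
Proof. by case=> supp _ /negP aJ; case E: (rho a) => //; case: aJ; apply/supp; rewrite E. Qed.

Lemma eq_is_rep n r (J : {fset vec n}) (sg1 sg2 : vec n -> tF F) :
  sg1 =1 sg2 -> is_rep r J sg1 -> is_rep r J sg2.
Proof.
move=> e [supp rel]; split=> [a|s hs al hal hmin i j hmax]; first by rewrite -e.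
by have := rel s hs al hal hmin i j hmax; congr fnull; apply: eq_map => k; rewrite !e.
Qed.

Lemma is_rep_pullback n m r r' (J : {fset vec n}) (K : {fset vec m})
    (f : vec n -> vec m) (rho : vec m -> tF F) :
  is_rep r' K rho -> {in J, forall a, f a \in K} ->
  (forall s al (i : 'I_s.+1 -> 'I_n) j, admissible r J al i j ->
     exists i', exists j', [/\ admissible r' K (f al) i' j',
       (forall y, vle al y -> vle y (rel_top al i j) -> f y \in K -> y \in J),
       (forall k, f (rel_lhs al i k) = rel_lhs (f al) i' k) &
       (forall k, f (rel_rhs al i j k) = rel_rhs (f al) i' j' k)]) ->
  is_rep r J (pullback J f rho).
Proof.
move=> rhoK fJK transfer; split=> [a|s hs al hal hmin i j hmax].
  rewrite /pullback; case: ifP => aJ; last by split.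
  by split=> // _; apply/(proj1 rhoK); apply: fJK.
have [i' [j' [[hs' hal' hmin' hmax'] reflJ elhs erhs]]] :=
  transfer s al i j (And4 hs hal hmin hmax).
have pullbackE (y : vec n) : (forall t, al t <= y t <= rel_top al i j t) ->
    pullback J f rho y = rho (f y).
  move=> hy; rewrite /pullback; case: ifP => // /negbT yJ; symmetry.
  apply: (rep_notin rhoK); apply: contra yJ.
  by apply: reflJ; apply/vleP => t; case/andP: (hy t).
have := (proj2 rhoK) s hs' (f al) hal' hmin' i' j' hmax'.
congr fnull; apply: eq_map => k.
rewrite (pullbackE (rel_lhs al i k)) ?(pullbackE (rel_rhs al i j k)) ?elhs ?erhs //.
- exact: rel_rhs_between.
- exact: rel_lhs_between.
Qed.

(* The rank clauses are there because the intermediate sets of a composite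
   embedding are not assumed to be M-convex. *)
Definition rep_embedding n m (J : {fset vec n}) (K : {fset vec m}) (f : vec n -> vec m) :=
  [/\ {in J, forall a, f a \in K}, {in J &, injective f},
      (forall r', rank r' K -> exists r, rank r J),
      (forall r r' (rho : vec m -> tF F), J != fset0 -> rank r J -> rank r' K ->
         is_rep r' K rho -> is_rep r J (pullback J f rho)) &
      (bij_on J K f -> forall r r' (sg : vec n -> tF F), J != fset0 -> rank r J -> rank r' K ->
         is_rep r J sg -> exists2 rho, is_rep r' K rho & pullback J f rho =1 sg)].

Lemma rep_embedding_eq_in n m (J : {fset vec n}) (K : {fset vec m}) (f g : vec n -> vec m) :
  {in J, f =1 g} -> rep_embedding J K f -> rep_embedding J K g.
Proof.
move=> fg [fJK finj rankJ pullJ sectJ].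
have pbE rho : pullback J f rho =1 pullback J g rho.
  by move=> a; rewrite /pullback; case: ifP => // aJ; rewrite fg.
split=> //.
- by move=> a aJ; rewrite -fg ?fJK.
- by move=> a b aJ bJ; rewrite -!fg //; apply: finj.
- by move=> r r' rho neJ rJ rK /(pullJ r r' rho neJ rJ rK); apply: eq_is_rep.
- move=> [ginj gsurj] r r' sg neJ rJ rK /(sectJ _ r r' sg neJ rJ rK) [].
  + by split=> // b /gsurj [a aJ <-]; exists a; rewrite ?fg.
  + by move=> rho rhoK e; exists rho => // a; rewrite -pbE.
Qed.

Lemma rep_embedding_comp n1 n2 n3 (J1 : {fset vec n1}) (J2 : {fset vec n2})
    (J3 : {fset vec n3}) (f : vec n1 -> vec n2) (g : vec n2 -> vec n3) :
  rep_embedding J1 J2 f -> rep_embedding J2 J3 g -> rep_embedding J1 J3 (g \o f).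
Proof.
move=> [fJ finj frank fpull fsect] [gJ ginj grank gpull gsect].
have pbE rho : pullback J1 (g \o f) rho =1 pullback J1 f (pullback J2 g rho).
  by move=> a; rewrite /pullback; case: ifP => // aJ; rewrite fJ.
have pb_eq (rho1 rho2 : vec n2 -> tF F) : rho1 =1 rho2 ->
    pullback J1 f rho1 =1 pullback J1 f rho2.
  by move=> e a; rewrite /pullback e.
have neJ2 : J1 != fset0 -> J2 != fset0.
  by case/fset0Pn => a aJ; apply/fset0Pn; exists (f a); apply: fJ.
split.
- by move=> a aJ; apply/gJ/fJ.
- by move=> a b aJ bJ /ginj eab; apply: finj => //; apply: eab; apply: fJ.
- by move=> r3 /grank [r2 /frank].
- move=> r1 r3 rho neJ r1J r3J rhoJ; have [r2 r2J] := grank r3 r3J.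
  apply: (eq_is_rep (sg1 := pullback J1 f (pullback J2 g rho))) => [a|]; first by rewrite pbE.
  by apply: (fpull r1 r2) => //; apply: (gpull r2 r3) => //; apply: neJ2.
- move=> [fginj fgsurj] r1 r3 sg neJ r1J r3J sgJ; have [r2 r2J] := grank r3 r3J.
  have gbij : bij_on J2 J3 g.
    by split=> // c /fgsurj [a aJ <-]; exists (f a); rewrite ?fJ.
  have fbij : bij_on J1 J2 f.
    split=> // b bJ; have [a aJ eab] := fgsurj (g b) (gJ b bJ).
    by exists a => //; apply: ginj; rewrite ?fJ.
  have [rho2 rho2J e2] := fsect fbij r1 r2 sg neJ r1J r2J sgJ.
  have [rho3 rho3J e3] := gsect gbij r2 r3 rho2 (neJ2 neJ) r2J r3J rho2J.
  by exists rho3 => // a; rewrite pbE (pb_eq _ _ e3).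
Qed.

End Pullback.

Section Relabel.
Variables (n m : nat) (p : 'I_n -> 'I_m).
Hypothesis p_inj : injective p.
Implicit Types (a : vec n) (b : vec m).

Definition relabel a : vec m := [ffun t => \sum_(k | p k == t) a k].
Definition restrict b : vec n := [ffun k => b (p k)].

Lemma relabel_im a k : relabel a (p k) = a k.
Proof. by rewrite ffunE (big_pred1 k) // => l /=; rewrite (inj_eq p_inj). Qed.

Lemma relabel_out a t : t \notin codom p -> relabel a t = 0.
Proof.
move=> tp; rewrite ffunE big_pred0 // => k; apply: contraNF tp => /eqP <-.
exact: codom_f.
Qed.

Lemma restrictK : cancel relabel restrict.
Proof. by move=> a; apply/ffunP => k; rewrite ffunE relabel_im. Qed.

Lemma relabel_inj : injective relabel.
Proof. exact: can_inj restrictK. Qed.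

Lemma relabelK b : (forall t, t \notin codom p -> b t = 0) -> relabel (restrict b) = b.
Proof.
move=> bout; apply/ffunP => t; case: (boolP (t \in codom p)) => [/codomP [k ->]|tp].
  by rewrite relabel_im ffunE.
by rewrite relabel_out ?bout.
Qed.

Lemma relabel_eq a b :
  (forall k, b (p k) = a k) -> (forall t, t \notin codom p -> b t = 0) -> b = relabel a.
Proof.
move=> bp bout; rewrite -(relabelK bout); congr relabel.
by apply/ffunP => k; rewrite ffunE bp.
Qed.

Lemma vsum_relabel a : vsum (relabel a) = vsum a.
Proof.
rewrite /vsum [RHS](partition_big p predT) //.
by apply: eq_bigr => t _; rewrite ffunE.
Qed.

Lemma relabelD a a' : relabel (vadd a a') = vadd (relabel a) (relabel a').
Proof.
symmetry; apply: relabel_eq => [k|t tp]; first by rewrite !vaddE !relabel_im.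
by rewrite vaddE !relabel_out.
Qed.

Lemma relabelB a a' : relabel (vsub a a') = vsub (relabel a) (relabel a').
Proof.
symmetry; apply: relabel_eq => [k|t tp]; first by rewrite !vsubE !relabel_im.
by rewrite vsubE !relabel_out.
Qed.

Lemma relabel_unitv i : relabel (unitv i) = unitv (p i).
Proof.
symmetry; apply: relabel_eq => [k|t tp]; first by rewrite !ffunE (inj_eq p_inj).
rewrite ffunE; case: eqP tp => // ->; by rewrite codom_f.
Qed.

Lemma relabel_sumunits l (f : 'I_l -> 'I_n) :
  relabel (sumunits f) = sumunits (fun k => p (f k)).
Proof.
symmetry; apply: relabel_eq => [k|t tp].
  by rewrite !ffunE; apply: eq_bigr => k' _; rewrite (inj_eq p_inj).
rewrite ffunE big1 // => k _; case: eqP tp => // <-; by rewrite codom_f.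
Qed.

Lemma restrictD b b' : restrict (vadd b b') = vadd (restrict b) (restrict b').
Proof. by apply/ffunP => k; rewrite !ffunE. Qed.

Lemma restrictB b b' : restrict (vsub b b') = vsub (restrict b) (restrict b').
Proof. by apply/ffunP => k; rewrite !ffunE. Qed.

Lemma restrict_unitv i i' : p i' = i -> restrict (unitv i) = unitv i'.
Proof. by move=> <-; apply/ffunP => k; rewrite !ffunE (inj_eq p_inj). Qed.

Lemma restrict_sumunits l (f : 'I_l -> 'I_m) (g : 'I_l -> 'I_n) :
  (forall k, p (g k) = f k) -> restrict (sumunits f) = sumunits g.
Proof.
move=> pg; apply/ffunP => k; rewrite !ffunE; apply: eq_bigr => k' _.
by rewrite -pg (inj_eq p_inj).
Qed.

Variable K : {fset vec n}.
Let K' := [fset relabel a | a in K]%fset.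

Lemma mem_relabel a : (relabel a \in K') = (a \in K).
Proof. exact: (mem_imfset _ _ relabel_inj). Qed.

Hypothesis neK : K != fset0.

Let neK' : K' != fset0.
Proof. by case/fset0Pn: neK => a aK; apply/fset0Pn; exists (relabel a); rewrite mem_relabel. Qed.

Lemma relabel_dmin a : vle (dmin K) a -> vle (dmin K') (relabel a).
Proof.
have [a0 a0K] := fset0Pn _ neK.
move/(vle_dminP _ neK) => h; apply/(vle_dminP _ neK') => t.
case: (boolP (t \in codom p)) => [/codomP [k ->]|tp].
  by have [b bK le] := h k; exists (relabel b); rewrite ?mem_relabel ?relabel_im.
by exists (relabel a0); rewrite ?mem_relabel // !relabel_out.
Qed.

Lemma relabel_dmax a : vle a (dmax K) -> vle (relabel a) (dmax K').
Proof.
have [a0 a0K] := fset0Pn _ neK.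
move/(vle_dmaxP _ neK) => h; apply/(vle_dmaxP _ neK') => t.
case: (boolP (t \in codom p)) => [/codomP [k ->]|tp].
  by have [b bK le] := h k; exists (relabel b); rewrite ?mem_relabel ?relabel_im.
by exists (relabel a0); rewrite ?mem_relabel // relabel_out.
Qed.

Lemma restrict_dmin b : vle (dmin K') b -> vle (dmin K) (restrict b).
Proof.
move/(vle_dminP _ neK') => h; apply/(vle_dminP _ neK) => k.
have [_ /imfsetP [a aK ->] le] := h (p k).
by exists a => //; move: le; rewrite relabel_im ffunE.
Qed.

Lemma restrict_dmax b : vle b (dmax K') -> vle (restrict b) (dmax K).
Proof.
move/(vle_dmaxP _ neK') => h; apply/(vle_dmaxP _ neK) => k.
have [_ /imfsetP [a aK ->] le] := h (p k).
by exists a => //; move: le; rewrite relabel_im ffunE.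
Qed.

Lemma relabel_dmax_out b t : vle b (dmax K') -> t \notin codom p -> b t = 0.
Proof.
move/(vle_dmaxP _ neK') => h tp; have [_ /imfsetP [a aK ->]] := h t.
by rewrite relabel_out // leqn0 => /eqP.
Qed.

Lemma relabel_dmax_restrictK b : vle b (dmax K') -> relabel (restrict b) = b.
Proof. by move=> bK; apply: relabelK => t; apply: relabel_dmax_out. Qed.

Lemma relabel_dmax_codom l (f : 'I_l -> 'I_m) b k :
  vle (sumunits f) b -> vle b (dmax K') -> f k \in codom p.
Proof.
move=> fb bK; apply: contraT => /(relabel_dmax_out (vle_trans fb bK)) bk0.
have := unitv_le_sumunits f k (f k); move/vleP: fb => /(_ (f k)).
by rewrite bk0 [unitv _ _]ffunE eqxx; lia.
Qed.

End Relabel.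

Section RelabelRep.
Variables (F : tract) (n m : nat) (p : 'I_n -> 'I_m) (K : {fset vec n}).
Hypothesis p_inj : injective p.
Let K' := [fset relabel p a | a in K]%fset.

Lemma is_rep_relabel r (rho : vec m -> tF F) :
  K != fset0 -> is_rep r K' rho -> is_rep r K (pullback K (relabel p) rho).
Proof.
move=> neK rhoK; apply: (is_rep_pullback rhoK) => [a aK|s al i j [hs hal hmin hmax]].
  by rewrite (mem_relabel p_inj).
have relabel_top : relabel p (rel_top al i j) = rel_top (relabel p al) (p \o i) (p \o j).
  by rewrite /rel_top !relabelD // !relabel_sumunits.
exists (p \o i), (p \o j); split.
- split=> //; first by rewrite vsum_relabel.
  + exact: relabel_dmin.
  + by rewrite -relabel_top; apply: relabel_dmax.
- by move=> y _ _; rewrite (mem_relabel p_inj).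
- by move=> k; rewrite /rel_lhs relabelB ?relabelD ?relabel_sumunits ?relabel_unitv.
- by move=> k; rewrite /rel_rhs !relabelD ?relabel_sumunits ?relabel_unitv.
Qed.

Lemma is_rep_restrict r (rho : vec n -> tF F) :
  K != fset0 -> is_rep r K rho -> is_rep r K' (pullback K' (restrict p) rho).
Proof.
move=> neK rhoK; apply: (is_rep_pullback rhoK) => [_ /imfsetP [a aK ->]|s al i j].
  by rewrite (restrictK p_inj).
case=> hs hal hmin hmax.
have sumunits_top l (f : 'I_l -> 'I_m) : vle (sumunits f) (rel_top al i j) ->
    forall k, f k \in codom p.
  by move=> ftop k; exact: (relabel_dmax_codom p_inj neK k ftop hmax).
have i_top : vle (sumunits i) (rel_top al i j).
  by apply/vleP => t; rewrite /rel_top !vaddE; lia.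
have j_top : vle (sumunits j) (rel_top al i j).
  by apply/vleP => t; rewrite /rel_top !vaddE; lia.
have hi := sumunits_top _ i i_top; have hj := sumunits_top _ j j_top.
have below_top y : vle y (rel_top al i j) -> relabel p (restrict p y) = y.
  by move=> ytop; exact: (relabel_dmax_restrictK p_inj neK (vle_trans ytop hmax)).
exists (fun k => iinv (hi k)), (fun k => iinv (hj k)).
have ri : restrict p (sumunits i) = sumunits (fun k => iinv (hi k)).
  by apply: restrict_sumunits => // k; rewrite f_iinv.
have rj : restrict p (sumunits j) = sumunits (fun k => iinv (hj k)).
  by apply: restrict_sumunits => // k; rewrite f_iinv.
have rik k : restrict p (unitv (i k)) = unitv (iinv (hi k)).
  by apply: restrict_unitv => //; rewrite f_iinv.
split.
- split=> //.
  + rewrite -hal -[in RHS](below_top al) ?vsum_relabel //.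
    by apply/vleP => t; rewrite !vaddE; lia.
  + exact: restrict_dmin.
  + by rewrite /rel_top -ri -rj -!restrictD; apply: restrict_dmax.
- by move=> y _ /below_top yK; rewrite -{2}yK (mem_relabel p_inj).
- by move=> k; rewrite /rel_lhs restrictB restrictD ri rik.
- by move=> k; rewrite /rel_rhs !restrictD rj rik.
Qed.

Lemma rank_relabel r : rank r K' <-> rank r K.
Proof.
split=> rK a; first by move=> aK; rewrite -(vsum_relabel p) rK ?(mem_relabel p_inj).
by case/imfsetP => b bK ->; rewrite vsum_relabel rK.
Qed.

Lemma rep_embedding_relabel : rep_embedding F K K' (relabel p).
Proof.
split.
- by move=> a aK; rewrite (mem_relabel p_inj).
- by move=> a b _ _; apply: (relabel_inj p_inj).
- by move=> r /rank_relabel rK; exists r.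
- move=> r r' rho neK rK /rank_relabel rK'; have <- := rank_unique neK rK rK'.
  exact: is_rep_relabel.
- move=> _ r r' sg neK rK /rank_relabel rK' sgK; have <- := rank_unique neK rK rK'.
  exists (pullback K' (restrict p) sg); first exact: is_rep_restrict.
  move=> a; rewrite /pullback (mem_relabel p_inj) (restrictK p_inj).
  by case: (boolP (a \in K)) => aK //; rewrite (rep_notin sgK).
Qed.

Lemma rep_embedding_restrict : rep_embedding F K' K (restrict p).
Proof.
have neK' : K' != fset0 -> K != fset0.
  by case/fset0Pn => _ /imfsetP [a aK _]; apply/fset0Pn; exists a.
split.
- by move=> _ /imfsetP [a aK ->]; rewrite (restrictK p_inj).
- by move=> _ _ /imfsetP [a aK ->] /imfsetP [b bK ->]; rewrite !(restrictK p_inj) => ->.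
- by move=> r /rank_relabel rK; exists r.
- move=> r r' rho /neK' neK /rank_relabel rK' rK; have <- := rank_unique neK rK' rK.
  exact: is_rep_restrict.
- move=> _ r r' sg /neK' neK /rank_relabel rK' rK sgK; have -> := rank_unique neK rK rK'.
  exists (pullback K (relabel p) sg); first exact: is_rep_relabel.
  move=> b; rewrite /pullback; case: ifP => [/imfsetP [a aK ->]|bK].
    by rewrite (restrictK p_inj) aK.
  by rewrite (rep_notin sgK) ?bK.
Qed.

End RelabelRep.

(* [shiftv a d] is the translate [a + d] only when [shiftable d a]; elsewhere
   the absolute value in [shiftv] produces junk. *)
Definition shiftable n (d : {ffun 'I_n -> int}) (a : vec n) := forall t, (0 <= (a t)%:Z + d t)%R.
Definition negv n (d : {ffun 'I_n -> int}) : {ffun 'I_n -> int} := [ffun t => - d t]%R.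

Section Translation.
Variables (n : nat) (d : {ffun 'I_n -> int}).
Implicit Types (a b y : vec n).

Lemma shiftvE a t : shiftv a d t = `|((a t)%:Z + d t)%R|%N.
Proof. by rewrite ffunE. Qed.

Lemma shiftable_le a y : shiftable d a -> vle a y -> shiftable d y.
Proof. by move=> ha /vleP ay t; have := ha t; have := ay t; lia. Qed.

Lemma shiftv_inj_in a b : shiftable d a -> shiftable d b -> shiftv a d = shiftv b d -> a = b.
Proof.
move=> ha hb e; apply: vecP => t.
have : shiftv a d t = shiftv b d t by rewrite e.
rewrite !shiftvE.
by have := ha t; have := hb t; lia.
Qed.

Lemma vsum_shiftv a : shiftable d a -> ((vsum (shiftv a d))%:Z = (vsum a)%:Z + \sum_t d t)%R.
Proof.
move=> ha; rewrite /vsum !(big_morph Posz PoszD (erefl (Posz 0))) -big_split /=.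
by apply: eq_bigr => t _; rewrite shiftvE; have := ha t; lia.
Qed.

Section ShiftedTerms.
Variables (s : nat) (al : vec n) (i : 'I_s.+1 -> 'I_n) (j : 'I_s.-1 -> 'I_n).
Hypothesis al_ok : shiftable d al.

Lemma shiftv_lhs k : shiftv (rel_lhs al i k) d = rel_lhs (shiftv al d) i k.
Proof.
apply: vecP => t; rewrite /rel_lhs shiftvE !vsubE !vaddE shiftvE.
by have := unitv_le_sumunits i k t; have := al_ok t; lia.
Qed.

Lemma shiftv_rhs k : shiftv (rel_rhs al i j k) d = rel_rhs (shiftv al d) i j k.
Proof. by apply: vecP => t; rewrite /rel_rhs shiftvE !vaddE shiftvE; have := al_ok t; lia. Qed.

Lemma shiftv_top : shiftv (rel_top al i j) d = rel_top (shiftv al d) i j.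
Proof. by apply: vecP => t; rewrite /rel_top shiftvE !vaddE shiftvE; have := al_ok t; lia. Qed.

End ShiftedTerms.

Variables (K : {fset vec n}) (F : tract).
Hypothesis K_ok : {in K, forall a, shiftable d a}.
Let K' := [fset shiftv a d | a in K]%fset.

Lemma is_rep_shiftv r r' (rho : vec n -> tF F) :
  K != fset0 -> rank r K -> (r'%:Z = r%:Z + \sum_t d t)%R ->
  is_rep r' K' rho -> is_rep r K (pullback K (fun a => shiftv a d) rho).
Proof.
move=> neK rK er' rhoK.
have neK' : K' != fset0.
  by case/fset0Pn: neK => a aK; apply/fset0Pn; exists (shiftv a d); apply: in_imfset.
apply: (is_rep_pullback rhoK) => [a aK|s al i j [hs hal hmin hmax]]; first exact: in_imfset.
have al_ok : shiftable d al.
  by move=> t; have [b bK le] := vle_dminP _ neK hmin t; have := K_ok bK t; lia.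
have top_ok : shiftable d (rel_top al i j).
  by apply: shiftable_le al_ok _; apply/vleP => t; rewrite !vaddE; lia.
exists i, j; split.
- split.
  + by have := vsum_shiftv al_ok; lia.
  + by have := vsum_shiftv al_ok; lia.
  + apply/(vle_dminP _ neK') => t; have [b bK le] := vle_dminP _ neK hmin t.
    exists (shiftv b d); first exact: in_imfset.
    by rewrite !shiftvE; have := K_ok bK t; lia.
  + rewrite -shiftv_top //; apply/(vle_dmaxP _ neK') => t.
    have [b bK le] := vle_dmaxP _ neK hmax t.
    exists (shiftv b d); first exact: in_imfset.
    by rewrite !shiftvE; have := top_ok t; lia.
- move=> y aly _ /imfsetP [b bK eyb].
  suff -> : y = b by [].
  by apply: shiftv_inj_in eyb; [apply: shiftable_le al_ok aly | apply: K_ok].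
- exact: shiftv_lhs.
- exact: shiftv_rhs.
Qed.

End Translation.

Section Unshift.
Variables (n : nat) (d : {ffun 'I_n -> int}) (K : {fset vec n}).
Hypothesis K_ok : {in K, forall a, shiftable d a}.
Let K' := [fset shiftv a d | a in K]%fset.

Lemma shiftv_negvK a : a \in K -> shiftv (shiftv a d) (negv d) = a.
Proof. by move/K_ok=> ha; apply: vecP => t; rewrite !shiftvE ffunE; have := ha t; lia. Qed.

Lemma shiftable_negv : {in K', forall b, shiftable (negv d) b}.
Proof. by move=> _ /imfsetP [a aK ->] t; rewrite shiftvE ffunE; have := K_ok aK t; lia. Qed.

Lemma imfset_shiftv_negvK : [fset shiftv b (negv d) | b in K']%fset = K.
Proof.
apply/fsetP => a; apply/imfsetP/idP => [[_ /imfsetP [a' a'K ->] ->]|aK].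
  by rewrite shiftv_negvK.
by exists (shiftv a d); [exact: in_imfset | rewrite shiftv_negvK].
Qed.

Lemma rank_shiftv a r r' : a \in K -> rank r K -> rank r' K' ->
  (r'%:Z = r%:Z + \sum_t d t)%R.
Proof.
move=> aK rK r'K'; rewrite -(rK a aK) -(r'K' _ (in_imfset _ _ aK)).
exact/vsum_shiftv/K_ok.
Qed.

Lemma rep_embedding_unshift (F : tract) : rep_embedding F K' K (fun b => shiftv b (negv d)).
Proof.
have neK : K' != fset0 -> K != fset0.
  by case/fset0Pn => _ /imfsetP [a aK _]; apply/fset0Pn; exists a.
split.
- by move=> _ /imfsetP [a aK ->]; rewrite shiftv_negvK.
- by move=> _ _ /imfsetP [a aK ->] /imfsetP [b bK ->]; rewrite !shiftv_negvK // => ->.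
- move=> r rK; exists `|(r%:Z + \sum_t d t)%R|%N => _ /imfsetP [a aK ->].
  by have := vsum_shiftv (K_ok aK); rewrite (rK a aK); lia.
- move=> r' r rho /[dup] /neK /fset0Pn [a aK] neK' r'K' rK.
  rewrite -{1}imfset_shiftv_negvK => rhoK.
  apply: (is_rep_shiftv shiftable_negv neK' r'K' _ rhoK).
  have := vsum_shiftv (shiftable_negv (in_imfset _ _ aK)).
  by rewrite shiftv_negvK // (rK a aK) (r'K' _ (in_imfset _ _ aK)).
- move=> _ r' r sg /[dup] /neK /[dup] neKK /fset0Pn [a aK] neK' r'K' rK sgK'.
  exists (pullback K (fun a => shiftv a d) sg).
    exact: (is_rep_shiftv K_ok neKK rK (rank_shiftv aK rK r'K') sgK').
  move=> b; rewrite /pullback; case: ifP => [/imfsetP [a' a'K ->]|bK'].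
    by rewrite shiftv_negvK // a'K.
  by rewrite (rep_notin sgK') ?bK'.
Qed.

End Unshift.

Definition box_closed n (J0 J : {fset vec n}) :=
  forall y, y \in J -> vle (dmin J0) y -> vle y (dmax J0) -> y \in J0.

Section SubRep.
Variables (F : tract) (n : nat) (J0 J : {fset vec n}).
Hypotheses (J0J : (J0 `<=` J)%fset) (J0_box : box_closed J0 J).

Lemma is_rep_sub r (rho : vec n -> tF F) :
  J0 != fset0 -> is_rep r J rho -> is_rep r J0 (pullback J0 id rho).
Proof.
move=> neJ0 rhoJ; have neJ : J != fset0.
  by case/fset0Pn: neJ0 => a /(fsubsetP J0J) aJ; apply/fset0Pn; exists a.
apply: (is_rep_pullback rhoJ) => [a /(fsubsetP J0J) //|s al i j [hs hal hmin hmax]].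
exists i, j; split=> //.
- split=> //.
  + apply/(vle_dminP _ neJ) => t; have [b /(fsubsetP J0J) bJ le] := vle_dminP _ neJ0 hmin t.
    by exists b.
  + apply/(vle_dmaxP _ neJ) => t; have [b /(fsubsetP J0J) bJ le] := vle_dmaxP _ neJ0 hmax t.
    by exists b.
- move=> y aly ytop yJ; apply: J0_box => //; first exact: vle_trans hmin aly.
  exact: vle_trans ytop hmax.
Qed.

Lemma rep_embedding_sub : rep_embedding F J0 J id.
Proof.
split.
- by move=> a /(fsubsetP J0J).
- by [].
- by move=> r rJ; exists r => a /(fsubsetP J0J) /rJ.
- move=> r r' rho neJ0 rJ0 rJ; have <- : r = r'.
    by apply: rank_unique neJ0 rJ0 _ => a /(fsubsetP J0J) /rJ.
  exact: is_rep_sub.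
- move=> [_ surj] r r' sg neJ0 rJ0 rJ sgJ0.
  have eJ : J0 = J.
    apply/eqP; rewrite eqEfsubset J0J; apply/fsubsetP => b /surj [a aJ0 <-] //.
  have er : r = r' by rewrite -eJ in rJ; apply: rank_unique neJ0 rJ0 rJ.
  exists sg; first by rewrite -eJ -er.
  by move=> a; rewrite /pullback; case: ifP => // /negbT aJ0; rewrite (rep_notin sgJ0).
Qed.

End SubRep.

Section Minor.
Variables (F : tract) (n : nat) (J : {fset vec n}) (nu mu : vec n) (tau : {ffun 'I_n -> int}).
Local Notation D := (delset J nu).
Local Notation J0 := [fset a in D | vle (vadd (dmin D) mu) a]%fset.
Local Notation dmu := ([ffun t => - (mu t)%:Z]%R : {ffun 'I_n -> int}).

Lemma mem_minor_core a :
  (a \in J0) = [&& a \in J, vle (vadd a nu) (dmax J) & vle (vadd (dmin D) mu) a].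
Proof. by rewrite !inE andbA. Qed.

Lemma minor_core_box : J0 != fset0 -> box_closed J0 J.
Proof.
move=> neJ0 y yJ /(vle_dminP _ neJ0) lo /(vle_dmaxP _ neJ0) hi.
rewrite mem_minor_core yJ /=; apply/andP; split; apply/vleP => t; rewrite !vaddE.
  have [b] := hi t; rewrite mem_minor_core => /and3P [_ /vleP/(_ t) + _].
  by rewrite vaddE; lia.
have [b] := lo t; rewrite mem_minor_core => /and3P [_ _ /vleP/(_ t)].
by rewrite vaddE; lia.
Qed.

Lemma conset_shiftv : conset D mu = [fset shiftv a dmu | a in J0]%fset.
Proof.
apply: eq_in_imfset => a; rewrite mem_minor_core => /and3P [_ _ /vleP le].
by apply: vecP => t; rewrite vsubE !ffunE; have := le t; rewrite vaddE; lia.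
Qed.

Lemma rep_embedding_minor :
  minor_ok J nu mu tau -> rep_embedding F (minor J nu mu tau) J (minor_emb mu tau).
Proof.
(* [minor_emb mu tau] is: translate by [- tau], then by [mu], then include J0. *)
case=> [[a aJ [lo hi]] tau_ok].
have neJ0 : J0 != fset0.
  apply/fset0Pn; exists a; rewrite mem_minor_core aJ hi /=.
  by apply/vleP => t; move/vleP: lo => /(_ t); rewrite !vaddE addnC.
have C_ok : {in conset D mu, forall c, shiftable tau c}.
  by move=> c cC t; have := tau_ok t; have := dmin_leq t cC; lia.
have J0_ok : {in J0, forall a, shiftable dmu a}.
  move=> b; rewrite mem_minor_core => /and3P [_ _ /vleP le] t.
  by rewrite ffunE; have := le t; rewrite vaddE; lia.
have MC := rep_embedding_unshift C_ok F.
have CJ0 := rep_embedding_unshift J0_ok F; rewrite -conset_shiftv in CJ0.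
have J0J : (J0 `<=` J)%fset by apply/fsubsetP => b; rewrite mem_minor_core => /andP [].
apply: rep_embedding_eq_in (rep_embedding_comp (rep_embedding_comp MC CJ0)
  (rep_embedding_sub F J0J (minor_core_box neJ0))).
move=> _ /imfsetP [c cC ->]; apply: vecP => t; rewrite /= !ffunE.
by have := C_ok c cC t; lia.
Qed.

End Minor.

Lemma permv_relabel n (s : 'S_n) (a : vec n) : permv s a = relabel s a.
Proof.
apply: (relabel_eq (@perm_inj _ s)) => [k|t]; first by rewrite ffunE permK.
by rewrite -{1}(permKV s t) codom_f.
Qed.

Lemma extv_relabel n (a : vec n) : extv a = relabel (lift ord_max) a.
Proof.
apply: (relabel_eq (@lift_inj _ ord_max)) => [k|t]; first by rewrite ffunE liftK.
by rewrite ffunE; case: unliftP => // k ->; rewrite codom_f.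
Qed.

Lemma permset_relabel n (s : 'S_n) (J : {fset vec n}) :
  permset s J = [fset relabel s a | a in J]%fset.
Proof. by apply: eq_imfset => // a; apply: permv_relabel. Qed.

Lemma extset_relabel n (J : {fset vec n}) :
  extset J = [fset relabel (lift ord_max) a | a in J]%fset.
Proof. by apply: eq_imfset => // a; apply: extv_relabel. Qed.

Lemma PE_rep_embedding (F : tract) n n' (J : {fset vec n}) (J' : {fset vec n'}) iota :
  PE J J' iota -> rep_embedding F J J' iota.
Proof.
elim=> {n n' J J' iota} [n r J nu mu tau _ | n r J s _ | n r J _ | n r J _ |
  n1 n2 n3 J1 J2 J3 f g _ fJ _ gJ].
- exact: rep_embedding_minor.
- rewrite permset_relabel.
  apply: rep_embedding_eq_in (rep_embedding_relabel F J (@perm_inj _ s)) => a _.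
  by rewrite permv_relabel.
- rewrite extset_relabel.
  apply: rep_embedding_eq_in (rep_embedding_relabel F J (@lift_inj _ ord_max)) => a _.
  by rewrite extv_relabel.
- rewrite extset_relabel; exact: rep_embedding_restrict (@lift_inj _ ord_max).
- exact: rep_embedding_comp fJ gJ.
Qed.

Section GrassmannianMap.
Variables (F : tract) (n n' : nat) (J : {fset vec n}) (iota : vec n -> vec n').

Lemma rep_equiv_eqfun (sg1 sg2 : vec n -> tF F) : sg1 =1 sg2 -> rep_equiv sg1 sg2.
Proof. by move=> e; exists (tone F) => a; rewrite e; case: (sg2 a) => //= x; rewrite tmul1. Qed.

Lemma rep_equiv_pullback (rho1 rho2 : vec n' -> tF F) :
  rep_equiv rho1 rho2 -> rep_equiv (pullback J iota rho1) (pullback J iota rho2).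
Proof. by case=> c e; exists c => a; rewrite /pullback; case: ifP. Qed.

Lemma rep_equiv_pullback_inj r' (J' : {fset vec n'}) (rho1 rho2 : vec n' -> tF F) :
  (forall b, b \in J' -> exists2 a, a \in J & iota a = b) ->
  is_rep r' J' rho1 -> is_rep r' J' rho2 ->
  rep_equiv (pullback J iota rho1) (pullback J iota rho2) -> rep_equiv rho1 rho2.
Proof.
move=> surj rho1J' rho2J' [c e]; exists c => b.
case: (boolP (b \in J')) => [/surj [a aJ <-]|bJ']; first by have := e a; rewrite /pullback aJ.
by rewrite (rep_notin rho1J') ?(rep_notin rho2J').
Qed.

End GrassmannianMap.

Theorem theoremE (F : tract) (n r n' r' : nat)
    (J : {fset vec n}) (J' : {fset vec n'}) (iota : vec n -> vec n') :
  near_idempotent F -> Mconvex r J -> Mconvex r' J' -> PE J J' iota ->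
  (* iota^* rho is an F-representation of J *)
  (forall rho : vec n' -> tF F, is_rep r' J' rho -> is_rep r J (pullback J iota rho)) /\
  (* [rho] |-> [iota^* rho] is well defined on Gr_{J'}(F) -> Gr_J(F) *)
  (forall rho1 rho2 : vec n' -> tF F, is_rep r' J' rho1 -> is_rep r' J' rho2 ->
     rep_equiv rho1 rho2 ->
     rep_equiv (pullback J iota rho1) (pullback J iota rho2)) /\
  (* if iota is bijective, iota^* : Gr_{J'}(F) -> Gr_J(F) is bijective *)
  (bij_on J J' iota ->
     (forall rho1 rho2 : vec n' -> tF F, is_rep r' J' rho1 -> is_rep r' J' rho2 ->
        rep_equiv (pullback J iota rho1) (pullback J iota rho2) ->
        rep_equiv rho1 rho2) /\
     (forall sigma : vec n -> tF F, is_rep r J sigma ->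
        exists2 rho : vec n' -> tF F, is_rep r' J' rho &
          rep_equiv (pullback J iota rho) sigma)).
Proof.
move=> _ [neJ [rJ _]] [_ [rJ' _]] /(PE_rep_embedding F) [_ _ _ pullJ sectJ].
split; first by move=> rho; apply: pullJ.
split; first by move=> rho1 rho2 _ _; apply: rep_equiv_pullback.
move=> bij; split; first by move=> rho1 rho2; apply: rep_equiv_pullback_inj; case: bij.
move=> sg sgJ; have [rho rhoJ' e] := sectJ bij r r' sg neJ rJ rJ' sgJ.
by exists rho => //; apply: rep_equiv_eqfun.
Qed.
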